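(* Let $K\ge1$, let $\boldsymbol{\lambda}=(\lambda_1,\dots,\lambda_K)$ with $\lambda_k\ge1$ for all $k$, and let $\beta>0$. For $\boldsymbol{\alpha}=e+\boldsymbol{\lambda}$ with $e\in\mathbb{R}^K_{\ge0}$ (the network output/evidence), put $S=\sum_k\alpha_k$, $\hat p_k=\alpha_k/S$, and for $y$ in the label space $\mathcal{Y}=\{y\in\mathbb{R}^K: y_i\in[0,1],\ \sum_i y_i=1\}$ define $$\mathcal{L}_{VI\text{-}EDL}(\boldsymbol{\alpha},y)=\sum_{k=1}^K(y_k-\hat p_k)^2+\sum_{k=1}^K\frac{\hat p_k(1-\hat p_k)}{S+1}+\beta\Big[\log\Gamma(S)-\sum_{k=1}^K\log\Gamma(\alpha_k)+\sum_{k=1}^K(\alpha_k-\lambda_k)\big(\psi(\alpha_k)-\psi(S)\big)\Big].$$ Then $\mathcal{L}_{VI\text{-}EDL}$ is globally Lipschitz continuous with respect to the network output, with Lipschitz constant $L_h$ (a uniform bound on the absolute values of the partial derivatives $|\partial\mathcal{L}_{VI\text{-}EDL}/\partial\alpha_i|$) satisfying $$L_h\le 2+\frac{1}{(K+1)^2}+\frac{2}{K(K+1)}+\beta\Big(2+\frac{1}{\min_j\lambda_j}+\frac{1}{\|\boldsymbol{\lambda}\|_1}\Big).$$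
   Context: $\Gamma$ is the Gamma function, $\psi$ the digamma function, and $\|\boldsymbol{\lambda}\|_1=\sum_k\lambda_k$. *)

From Stdlib Require Import Reals Lra.
From Coquelicot Require Import Coquelicot.
Open Scope R_scope.

Fixpoint sumR (K : nat) (f : nat -> R) : R :=
  match K with
  | O => 0
  | S n => sumR n f + f n
  end.

(* Minimum over indices 0..K-1 (K >= 1; value 0 for K = 0, never used). *)
Fixpoint minR (K : nat) (f : nat -> R) : R :=
  match K with
  | O => 0
  | S O => f O
  | S n => Rmin (minR n f) (f n)
  end.

Definition Gamma (x : R) : R :=
  RInt_gen (fun t => Rpower t (x - 1) * exp (- t)) (at_right 0) (Rbar_locally p_infty).

Definition lnGamma (x : R) : R := ln (Gamma x).

Definition digamma (x : R) : R := Derive lnGamma x.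

Definition in_simplex (K : nat) (y : nat -> R) : Prop :=
  (forall i, (i < K)%nat -> 0 <= y i <= 1) /\ sumR K y = 1.

Definition loss_VIEDL (K : nat) (lam : nat -> R) (beta : R)
    (alpha : nat -> R) (y : nat -> R) : R :=
  let S := sumR K alpha in
  let p := fun k => alpha k / S in
  sumR K (fun k => (y k - p k) ^ 2)
  + sumR K (fun k => p k * (1 - p k) / (S + 1))
  + beta * (lnGamma S - sumR K (fun k => lnGamma (alpha k))
            + sumR K (fun k => (alpha k - lam k) * (digamma (alpha k) - digamma S))).

Definition alpha_of (lam e : nat -> R) : nat -> R := fun k => e k + lam k.

(* alpha with coordinate i replaced by t (for partial derivatives). *)
Definition upd (alpha : nat -> R) (i : nat) (t : R) : nat -> R :=
  fun k => if Nat.eqb k i then t else alpha k.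

Definition Lh_bound (K : nat) (lam : nat -> R) (beta : R) : R :=
  2 + 1 / (INR K + 1) ^ 2 + 2 / (INR K * (INR K + 1))
  + beta * (2 + 1 / minR K lam + 1 / sumR K lam).

From Stdlib Require Import Reals Lra Lia FunctionalExtensionality.
From Coquelicot Require Import Coquelicot.
Open Scope R_scope.

(** Moving the single coordinate alpha_i changes every sum over k
    only in its i-th term, so along that coordinate the loss is an explicit
    function of t built from the moments S = sum alpha_k, sum y_k alpha_k and
    sum alpha_k^2, and from ln Gamma and psi at alpha_i and at S.  Its
    derivative is a sum of three pieces: the squared error contributes at most
    4/S <= 2 (the case K = 1 being trivial), the variance term at most
    1/(K+1)^2 + 2/(K(K+1)) because S >= K, and the regulariser contributes
    beta (e_i psi'(alpha_i) - (sum e) psi'(S)), a difference of two numbers of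
    [0,1] because 0 <= psi'(x) <= 1/(x-1).  These trigamma bounds come from
    reading psi'(x) as the variance of ln t under the density
    t^(x-1) e^(-t) / Gamma(x): the variance is at most the mean square
    deviation from ln x, and (ln t - ln x)^2 <= (t/x - 1)^2 / (t/x), whose mean
    is 1/(x-1) by Gamma(x+1) = x Gamma(x).  Gamma and its derivatives are
    handled as the integrals of (ln t)^n t^(x-1) e^(-t), differentiated under
    the integral sign.  Lipschitz continuity in l1 follows from the bound on the
    partial derivatives by the mean value theorem, one coordinate at a time. *)

Lemma sumR_ext (K : nat) (f g : nat -> R) :
  (forall k, (k < K)%nat -> f k = g k) -> sumR K f = sumR K g.
Proof.
  induction K as [|K IH]; intros H; simpl; [reflexivity|].
  rewrite IH, H; [reflexivity | lia | intros; apply H; lia].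
Qed.

Lemma sumR_plus (K : nat) (f g : nat -> R) :
  sumR K (fun k => f k + g k) = sumR K f + sumR K g.
Proof. induction K as [|K IH]; simpl; [ring|]. rewrite IH; ring. Qed.

Lemma sumR_minus (K : nat) (f g : nat -> R) :
  sumR K (fun k => f k - g k) = sumR K f - sumR K g.
Proof. induction K as [|K IH]; simpl; [ring|]. rewrite IH; ring. Qed.

Lemma sumR_scal (K : nat) (c : R) (f : nat -> R) :
  sumR K (fun k => c * f k) = c * sumR K f.
Proof. induction K as [|K IH]; simpl; [ring|]. rewrite IH; ring. Qed.

Lemma sumR_le (K : nat) (f g : nat -> R) :
  (forall k, (k < K)%nat -> f k <= g k) -> sumR K f <= sumR K g.
Proof.
  induction K as [|K IH]; intros H; simpl; [lra|].
  assert (f K <= g K) by (apply H; lia).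
  assert (sumR K f <= sumR K g) by (apply IH; intros; apply H; lia). lra.
Qed.

Lemma sumR_nonneg (K : nat) (f : nat -> R) :
  (forall k, (k < K)%nat -> 0 <= f k) -> 0 <= sumR K f.
Proof.
  induction K as [|K IH]; intros H; simpl; [lra|].
  assert (0 <= f K) by (apply H; lia).
  assert (0 <= sumR K f) by (apply IH; intros; apply H; lia). lra.
Qed.

Lemma sumR_ge_INR (K : nat) (f : nat -> R) :
  (forall k, (k < K)%nat -> 1 <= f k) -> INR K <= sumR K f.
Proof.
  induction K as [|K IH]; intros H; cbn [sumR]; [simpl; lra|]. rewrite S_INR.
  assert (1 <= f K) by (apply H; lia).
  assert (INR K <= sumR K f) by (apply IH; intros; apply H; lia). lra.
Qed.

Lemma sumR_ge_term (K : nat) (f : nat -> R) (i : nat) :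
  (i < K)%nat -> (forall k, (k < K)%nat -> 0 <= f k) -> f i <= sumR K f.
Proof.
  induction K as [|K IH]; intros Hi H; simpl; [lia|].
  assert (0 <= f K) by (apply H; lia).
  destruct (Nat.eq_dec i K) as [->|Hne].
  - assert (0 <= sumR K f) by (apply sumR_nonneg; intros; apply H; lia). lra.
  - assert (f i <= sumR K f) by (apply IH; [lia | intros; apply H; lia]). lra.
Qed.

Lemma sumR_sq_le_sq (K : nat) (f : nat -> R) :
  (forall k, (k < K)%nat -> 0 <= f k) -> sumR K (fun k => f k ^ 2) <= sumR K f ^ 2.
Proof.
  induction K as [|K IH]; intros H; simpl; [lra|].
  assert (sumR K (fun k => f k ^ 2) <= sumR K f ^ 2) by (apply IH; intros; apply H; lia).
  assert (0 <= sumR K f) by (apply sumR_nonneg; intros; apply H; lia).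
  assert (0 <= f K) by (apply H; lia). simpl in *. nra.
Qed.

Lemma minR_ge (K : nat) (f : nat -> R) (c : R) :
  (1 <= K)%nat -> (forall k, (k < K)%nat -> c <= f k) -> c <= minR K f.
Proof.
  induction K as [|[|K] IH]; intros HK H; [lia | apply H; lia |].
  change (c <= Rmin (minR (S K) f) (f (S K))).
  apply Rmin_glb; [apply IH; [lia | intros; apply H; lia] | apply H; lia].
Qed.

Lemma sumR_upd (K : nat) (g : nat -> R -> R) (a : nat -> R) (i : nat) (t : R) :
  (i < K)%nat ->
  sumR K (fun k => g k (upd a i t k)) = sumR K (fun k => g k (a k)) + (g i t - g i (a i)).
Proof.
  unfold upd. induction K as [|K IH]; intros Hi; simpl; [lia|].
  destruct (Nat.eqb_spec K i) as [<-|Hne].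
  - rewrite (sumR_ext K _ (fun k => g k (a k))); [ring|].
    intros k Hk. destruct (Nat.eqb_spec k K); [lia | reflexivity].
  - rewrite IH by lia. ring.
Qed.

Lemma upd_same (a : nat -> R) (m : nat) : upd a m (a m) = a.
Proof.
  apply functional_extensionality. intros k. unfold upd.
  destruct (Nat.eqb_spec k m) as [->|]; reflexivity.
Qed.

Lemma upd_upd (a : nat -> R) (m : nat) (x t : R) : upd (upd a m x) m t = upd a m t.
Proof. apply functional_extensionality. intros k. unfold upd. destruct (Nat.eqb k m); reflexivity. Qed.

Lemma upd_eq (a : nat -> R) (m : nat) (x : R) : upd a m x m = x.
Proof. unfold upd. rewrite Nat.eqb_refl. reflexivity. Qed.

Lemma exp_le_of_le (u v : R) : u <= v -> exp u <= exp v.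
Proof. intros H. destruct (Req_dec u v) as [->|]; [lra | left; apply exp_increasing; lra]. Qed.

Lemma ln_le_of_le (u v : R) : 0 < u -> u <= v -> ln u <= ln v.
Proof. intros Hu H. destruct (Req_dec u v) as [->|]; [lra | left; apply ln_increasing; lra]. Qed.

Lemma Rpower_pos (t p : R) : 0 < Rpower t p.
Proof. apply exp_pos. Qed.

Lemma cosh_ge_1 (c : R) : 1 <= cosh c.
Proof. unfold cosh. generalize (exp_ineq1_le c) (exp_ineq1_le (- c)). lra. Qed.

Lemma Rabs_le_Rabs_sinh (y : R) : Rabs y <= Rabs (sinh y).
Proof.
  destruct (MVT_abs sinh cosh 0 y) as [c [Hc _]].
  { intros c _. apply derivable_pt_lim_sinh. }
  replace (sinh y) with (sinh y - sinh 0) by (unfold sinh; rewrite Ropp_0, exp_0; field).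
  rewrite Hc, Rminus_0_r, (Rabs_pos_eq (cosh c)) by (generalize (cosh_ge_1 c); lra).
  generalize (cosh_ge_1 c) (Rabs_pos y). nra.
Qed.

Lemma ln_sq_le (u : R) : 0 < u -> ln u ^ 2 <= (u - 1) ^ 2 / u.
Proof.
  intros Hu. set (y := ln u / 2).
  assert (Hey : exp y * exp y = u).
  { rewrite <- exp_plus. unfold y. replace (ln u / 2 + ln u / 2) with (ln u) by field. apply exp_ln, Hu. }
  assert (Hinv : exp (- y) = / exp y) by apply exp_Ropp.
  assert (Hpos : 0 < exp y) by apply exp_pos.
  assert (E : (u - 1) ^ 2 / u = (2 * sinh y) ^ 2).
  { unfold sinh. rewrite Hinv, <- Hey. field. lra. }
  rewrite E, <- (pow2_abs (2 * sinh y)), <- (pow2_abs (ln u)).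
  replace (ln u) with (2 * y) by (unfold y; field).
  rewrite !Rabs_mult, Rabs_pos_eq by lra.
  apply pow_incr. split; [apply Rmult_le_pos; [lra | apply Rabs_pos] |].
  apply Rmult_le_compat_l; [lra | apply Rabs_le_Rabs_sinh].
Qed.

Lemma Rabs_between_0_le (c u : R) : Rmin 0 u <= c <= Rmax 0 u -> Rabs c <= Rabs u.
Proof. unfold Rmin, Rmax. destruct Rle_dec; intros; [rewrite !Rabs_pos_eq | rewrite !Rabs_left1]; lra. Qed.

Lemma Rabs_exp_sub_1_le (u : R) : Rabs (exp u - 1) <= Rabs u * exp (Rabs u).
Proof.
  destruct (MVT_abs exp exp 0 u) as [c [Hc Hcu]].
  { intros c _. apply derivable_pt_lim_exp. }
  rewrite exp_0 in Hc. rewrite Hc, Rminus_0_r, Rabs_pos_eq, Rmult_comm by (left; apply exp_pos).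
  apply Rmult_le_compat_l; [apply Rabs_pos |].
  apply Rle_trans with (exp (Rabs c)); apply exp_le_of_le; [apply Rle_abs | apply Rabs_between_0_le, Hcu].
Qed.

Lemma Rabs_exp_sub_1_sub_le (u : R) : Rabs (exp u - 1 - u) <= u ^ 2 * exp (Rabs u).
Proof.
  destruct (MVT_abs (fun v => exp v - v) (fun v => exp v - 1) 0 u) as [c [Hc Hcu]].
  { intros c _. apply is_derive_Reals. auto_derive; [exact I | ring]. }
  rewrite exp_0 in Hc. replace (exp u - 1 - u) with (exp u - u - (1 - 0)) by ring.
  rewrite Hc, Rminus_0_r.
  assert (Hcu' := Rabs_between_0_le c u Hcu).
  assert (exp (Rabs c) <= exp (Rabs u)) by (apply exp_le_of_le, Hcu').
  rewrite <- (pow2_abs u). simpl. rewrite Rmult_1_r.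
  apply Rle_trans with (Rabs c * exp (Rabs c) * Rabs u).
  - apply Rmult_le_compat_r; [apply Rabs_pos | apply Rabs_exp_sub_1_le].
  - replace (Rabs u * Rabs u * exp (Rabs u)) with (Rabs u * exp (Rabs u) * Rabs u) by ring.
    apply Rmult_le_compat_r; [apply Rabs_pos |].
    apply Rmult_le_compat; [apply Rabs_pos | left; apply exp_pos | exact Hcu' | assumption].
Qed.

Lemma exp_Rabs_mul_le (h d L : R) : Rabs h <= d -> exp (Rabs (h * L)) <= exp (d * L) + exp (- d * L).
Proof.
  intros Hh.
  assert (Hle : Rabs (h * L) <= d * Rabs L)
    by (rewrite Rabs_mult; apply Rmult_le_compat_r; [apply Rabs_pos | exact Hh]).
  generalize (exp_pos (d * L)) (exp_pos (- d * L)) (exp_le_of_le _ _ Hle).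
  unfold Rabs at 2. destruct Rcase_abs; [replace (d * - L) with (- d * L) by ring |]; lra.
Qed.

Lemma Rabs_ln_le_Rpower (t d : R) : 0 < t <= 1 -> 0 < d -> Rabs (ln t) <= Rpower t (- d) / d.
Proof.
  intros Ht Hd.
  assert (ln t <= 0) by (rewrite <- ln_1; apply ln_le_of_le; lra).
  rewrite Rabs_left1 by lra.
  assert (E := exp_ineq1_le (- d * ln t)). fold (Rpower t (- d)) in E.
  apply (Rmult_le_reg_r d); [exact Hd |]. unfold Rdiv. rewrite Rmult_assoc, Rinv_l by lra. nra.
Qed.

Lemma Rpower_le_exp (t q : R) : 0 < t -> 0 < q -> Rpower t q <= Rpower q q * exp t.
Proof.
  intros Ht Hq.
  replace t with (q * (t / q)) at 1 by (field; lra).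
  rewrite <- Rpower_mult_distr by (try apply Rdiv_lt_0_compat; lra).
  apply Rmult_le_compat_l; [left; apply Rpower_pos |].
  replace (exp t) with (Rpower (exp (t / q)) q)
    by (unfold Rpower; rewrite ln_exp; f_equal; field; lra).
  apply Rle_Rpower_l; [lra |]. split; [apply Rdiv_lt_0_compat; lra |].
  generalize (exp_ineq1_le (t / q)). lra.
Qed.

Lemma Rabs_div_le (N D c : R) : 0 < D -> Rabs N <= c * D -> Rabs (N / D) <= c.
Proof.
  intros HD HN. unfold Rdiv. rewrite Rabs_mult, Rabs_inv, (Rabs_pos_eq D) by lra.
  apply (Rmult_le_reg_r D); [exact HD |]. rewrite Rmult_assoc, Rinv_l, Rmult_1_r by lra. exact HN.
Qed.

Lemma continuous_of_ex_derive (f : R -> R) (x : R) : ex_derive f x -> continuous f x.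
Proof. apply (@ex_derive_continuous R_AbsRing R_NormedModule). Qed.

Lemma continuous_Rpower (p x : R) : 0 < x -> continuous (fun t => Rpower t p) x.
Proof. intros Hx. apply continuous_of_ex_derive. unfold Rpower. auto_derive. exact Hx. Qed.

Lemma is_derive_of_quadratic_remainder (f : R -> R) (x l M d : R) : 0 < d ->
  (forall h, Rabs h <= d -> Rabs (f (x + h) - f x - h * l) <= M * h ^ 2) -> is_derive f x l.
Proof.
  intros Hd H. apply is_derive_Reals. intros eps Heps.
  assert (HM : 0 < Rabs M + 1) by (generalize (Rabs_pos M); lra).
  assert (Hdelta : 0 < Rmin d (eps / (Rabs M + 1))) by (apply Rmin_pos; [lra | apply Rdiv_lt_0_compat; lra]).
  exists (mkposreal _ Hdelta). intros h Hh0 Hh. simpl in Hh.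
  assert (Hhd : Rabs h <= d) by (generalize (Rmin_l d (eps / (Rabs M + 1))); lra).
  assert (Hhe : Rabs h * (Rabs M + 1) < eps).
  { generalize (Rmin_r d (eps / (Rabs M + 1))). intros.
    apply (Rmult_lt_reg_r (/ (Rabs M + 1))); [apply Rinv_0_lt_compat, HM |].
    rewrite Rmult_assoc, Rinv_r by lra. fold (eps / (Rabs M + 1)). lra. }
  assert (Hpos : 0 < Rabs h) by (apply Rabs_pos_lt, Hh0).
  replace ((f (x + h) - f x) / h - l) with ((f (x + h) - f x - h * l) / h) by (field; exact Hh0).
  unfold Rdiv. rewrite Rabs_mult, Rabs_inv.
  apply (Rmult_lt_reg_r (Rabs h)); [exact Hpos |]. rewrite Rmult_assoc, Rinv_l, Rmult_1_r by lra.
  eapply Rle_lt_trans; [apply H, Hhd |].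
  rewrite <- (pow2_abs h). generalize (Rle_abs M). nra.
Qed.

Lemma at_right_0_below (d : R) : 0 < d -> at_right 0 (fun a => 0 < a < d).
Proof.
  intros Hd. exists (mkposreal d Hd). intros y Hy Hy0.
  assert (H : Rabs (y - 0) < d) by exact Hy.
  rewrite Rminus_0_r, Rabs_pos_eq in H by lra. lra.
Qed.

Lemma filterlim_at_point (F : R -> R) (a : R) : filterlim F (at_point a) (locally (F a)).
Proof. intros P HP. exact (locally_singleton _ _ HP). Qed.

Lemma filterlim_Rpower_0 (p : R) : 0 < p -> filterlim (fun t => Rpower t p) (at_right 0) (locally 0).
Proof.
  intros Hp. unfold Rpower.
  apply (filterlim_comp _ _ _ ln (fun u => exp (p * u)) _ (Rbar_locally m_infty)); [apply is_lim_ln_0 |].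
  apply (is_lim_comp (fun u => exp u) (fun u => p * u) m_infty 0 m_infty); [apply is_lim_exp_m | |].
  - assert (Hm : Rbar_mult p m_infty = m_infty).
    { simpl. destruct (Rle_dec 0 p) as [H|]; [destruct (Rle_lt_or_eq_dec 0 p H) |]; [reflexivity | lra | lra]. }
    rewrite <- Hm at 2. apply is_lim_scal_l, is_lim_id.
  - exists 0. intros; discriminate.
Qed.

Lemma filterlim_0_of_Rabs_le {F : (R -> Prop) -> Prop} {FF : Filter F} (u v : R -> R) :
  F (fun t => Rabs (v t) <= u t) -> filterlim u F (locally 0) -> filterlim v F (locally 0).
Proof.
  intros Hle Hu. apply (filterlim_le_le (fun t => - u t) v u (Finite 0)); [| | exact Hu].
  - generalize Hle. apply filter_imp. intros t. apply Rabs_le_between.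
  - replace (Finite 0) with (Finite (- 0)) by (f_equal; ring).
    apply (filterlim_comp _ _ _ u Ropp _ (locally 0)); [exact Hu |].
    apply (continuous_of_ex_derive Ropp 0). auto_derive. exact I.
Qed.

(** * Improper integrals *)

Lemma pos_of_Rmin_le (a b x : R) : 0 < a -> 0 < b -> Rmin a b <= x -> 0 < x.
Proof. intros Ha Hb Hx. generalize (Rmin_glb_lt a b 0 Ha Hb). lra. Qed.

Section Domination.

Variable D : R -> Prop.
Hypothesis D_convex : forall a b x, D a -> D b -> Rmin a b <= x <= Rmax a b -> D x.

Variables f g : R -> R.
Hypothesis f_le_g : forall x, D x -> continuous f x /\ continuous g x /\ Rabs (f x) <= g x.

Lemma ex_RInt_dom_f (a b : R) : D a -> D b -> ex_RInt f a b.
Proof.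
  intros Ha Hb. apply (@ex_RInt_continuous R_CompleteNormedModule).
  intros x Hx. apply f_le_g, (D_convex a b); assumption.
Qed.

Lemma ex_RInt_dom_g (a b : R) : D a -> D b -> ex_RInt g a b.
Proof.
  intros Ha Hb. apply (@ex_RInt_continuous R_CompleteNormedModule).
  intros x Hx. apply f_le_g, (D_convex a b); assumption.
Qed.

Lemma Rabs_RInt_le_dom (a b : R) : D a -> D b -> Rabs (RInt f a b) <= Rabs (RInt g a b).
Proof.
  assert (ordered : forall a b, D a -> D b -> a <= b -> Rabs (RInt f a b) <= Rabs (RInt g a b)).
  { clear a b. intros a b Ha Hb Hab.
    assert (Hx : forall x, a < x < b -> D x)
      by (intros x Hx; apply (D_convex a b); [assumption | assumption | rewrite Rmin_left, Rmax_right; lra]).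
    eapply Rle_trans; [apply abs_RInt_le; [exact Hab | apply ex_RInt_dom_f; assumption] |].
    eapply Rle_trans; [| apply Rle_abs].
    apply RInt_le; [exact Hab | | apply ex_RInt_dom_g; assumption |].
    - apply (@ex_RInt_continuous R_CompleteNormedModule). intros x Hx'.
      apply (continuous_comp f Rabs); [apply f_le_g | apply continuous_Rabs].
      apply (D_convex a b); assumption.
    - intros x Hx'. apply f_le_g, Hx, Hx'. }
  intros Ha Hb. destruct (Rle_dec a b) as [Hab|Hab]; [apply ordered; assumption |].
  rewrite <- (opp_RInt_swap f), <- (opp_RInt_swap g)
    by (first [apply ex_RInt_dom_f | apply ex_RInt_dom_g]; assumption).
  unfold opp; simpl. rewrite !Rabs_Ropp. apply ordered; [assumption | assumption | lra].
Qed.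

Lemma Rabs_RInt_sub_RInt_le_dom (a b a0 b0 : R) : D a -> D b -> D a0 -> D b0 ->
  Rabs (RInt f a b - RInt f a0 b0)
  <= Rabs (RInt g a b0 - RInt g a0 b0) + Rabs (RInt g a0 b - RInt g a0 b0).
Proof.
  intros Ha Hb Ha0 Hb0.
  assert (chasles : forall (h : R -> R) u v w, (forall u v, D u -> D v -> ex_RInt h u v) ->
            D u -> D v -> D w -> RInt h u w = Rplus (RInt h u v) (RInt h v w)).
  { intros h u v w Hh Hu Hv Hw. symmetry. apply (RInt_Chasles h); apply Hh; assumption. }
  rewrite (chasles f a a0 b), (chasles f a0 b0 b) by (try apply ex_RInt_dom_f; assumption).
  rewrite (chasles g a a0 b0), (chasles g a0 b0 b) by (try apply ex_RInt_dom_g; assumption).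
  assert (E1 : forall u v w : R, u + (v + w) - v = u + w) by (intros; ring).
  assert (E2 : forall u v : R, u + v - v = u) by (intros; ring).
  assert (E3 : forall u v : R, u + v - u = v) by (intros; ring).
  rewrite E1, E2, E3.
  eapply Rle_trans; [apply Rabs_triang |].
  apply Rplus_le_compat; apply Rabs_RInt_le_dom; assumption.
Qed.

(* The values [RInt f a b] form a Cauchy filter: by [Rabs_RInt_sub_RInt_le_dom] their
   oscillation is controlled by that of the convergent [RInt g a b]. *)
Lemma ex_RInt_gen_dominated {Fa Fb : (R -> Prop) -> Prop} {FFa : ProperFilter Fa} {FFb : ProperFilter Fb}
  (lg : R) :
  filter_prod Fa Fb (fun ab => D (fst ab) /\ D (snd ab)) ->
  is_RInt_gen g Fa Fb lg -> ex_RInt_gen f Fa Fb.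
Proof.
  intros HD Hg.
  assert (near_lg : forall eps : posreal, filter_prod Fa Fb
            (fun ab => D (fst ab) /\ D (snd ab) /\ Rabs (RInt g (fst ab) (snd ab) - lg) < eps)).
  { intros eps. generalize (filter_and _ _ HD (Hg (ball lg eps) (locally_ball lg eps))).
    apply filter_imp. intros [a b] [[Ha Hb] [y [Hy Hball]]]. simpl in *.
    rewrite (is_RInt_unique _ _ _ _ Hy). auto. }
  set (Fm := filtermap (fun ab => RInt f (fst ab) (snd ab)) (filter_prod Fa Fb)).
  assert (Fm_proper : ProperFilter Fm) by (apply filtermap_proper_filter, filter_prod_proper; assumption).
  assert (Fm_cauchy : cauchy Fm).
  { intros eps.
    destruct (near_lg (pos_div_2 (pos_div_2 eps))) as [Q Q' HQ HQ' HQQ'].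
    destruct (filter_ex _ HQ) as [a0 Ha0]. destruct (filter_ex _ HQ') as [b0 Hb0].
    exists (RInt f a0 b0). apply Filter_prod with Q Q'; [assumption | assumption |].
    intros a b Ha Hb. change (Rabs (RInt f a b - RInt f a0 b0) < eps).
    destruct (HQQ' a b0 Ha Hb0) as (Da & Db0 & E1).
    destruct (HQQ' a0 b Ha0 Hb) as (Da0 & Db & E2).
    destruct (HQQ' a0 b0 Ha0 Hb0) as (_ & _ & E3). simpl in *.
    eapply Rle_lt_trans; [apply Rabs_RInt_sub_RInt_le_dom; assumption |].
    assert (T : forall u v, Rabs (u - v) <= Rabs (u - lg) + Rabs (v - lg)).
    { intros u v. replace (u - v) with ((u - lg) - (v - lg)) by ring.
      eapply Rle_trans; [apply Rabs_triang | rewrite Rabs_Ropp; lra]. }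
    generalize (T (RInt g a b0) (RInt g a0 b0)) (T (RInt g a0 b) (RInt g a0 b0)). lra. }
  exists (lim Fm). intros P [eps HP]. unfold filtermapi.
  assert (Hlim : filter_prod Fa Fb (fun ab => ball (lim Fm) eps (RInt f (fst ab) (snd ab))))
    by exact (complete_cauchy Fm Fm_proper Fm_cauchy eps).
  generalize (filter_and _ _ HD Hlim).
  apply filter_imp. intros [a b] [[Ha Hb] Hab]. simpl in *.
  exists (RInt f a b). split; [apply (@RInt_correct R_CompleteNormedModule), ex_RInt_dom_f; assumption |].
  apply HP, Hab.
Qed.

End Domination.

Lemma is_RInt_gen_primitive (Fa Fb : (R -> Prop) -> Prop) {FFa : Filter Fa} {FFb : Filter Fb}
  (F f : R -> R) (la lb : R) :
  filter_prod Fa Fb (fun ab => 0 < fst ab /\ 0 < snd ab) ->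
  (forall x, 0 < x -> is_derive F x (f x)) -> (forall x, 0 < x -> continuous f x) ->
  filterlim F Fa (locally la) -> filterlim F Fb (locally lb) ->
  is_RInt_gen f Fa Fb (lb - la).
Proof.
  intros Hpos HF Hf Hla Hlb.
  assert (on_segments : forall P : R -> Prop, (forall x, 0 < x -> P x) ->
            filter_prod Fa Fb
              (fun ab => forall x, Rmin (fst ab) (snd ab) <= x <= Rmax (fst ab) (snd ab) -> P x)).
  { intros P HP. generalize Hpos. apply filter_imp. intros [a b] [Ha Hb] x Hx.
    apply HP, (pos_of_Rmin_le a b); simpl in *; lra. }
  apply is_RInt_gen_ext with (Derive F).
  - generalize (on_segments (fun x => Derive F x = f x) (fun x Hx => is_derive_unique _ _ _ (HF x Hx))).
    apply filter_imp. intros ab H x Hx. apply H. lra.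
  - apply is_RInt_gen_Derive; [| | assumption | assumption].
    + apply on_segments. intros x Hx. exists (f x). apply HF, Hx.
    + apply on_segments. intros x Hx. apply continuous_ext_loc with f; [| apply Hf, Hx].
      apply (locally_interval _ x 0 p_infty); [exact Hx | exact I |].
      intros y Hy _. symmetry. apply is_derive_unique, HF, Hy.
Qed.

Lemma is_RInt_gen_Rpower_0_1 (r : R) : -1 < r ->
  is_RInt_gen (fun t => Rpower t r) (at_right 0) (at_point 1) (/ (r + 1)).
Proof.
  intros Hr.
  replace (/ (r + 1)) with (Rpower 1 (r + 1) / (r + 1) - 0 / (r + 1))
    by (unfold Rpower; rewrite ln_1, Rmult_0_r, exp_0; field; lra).
  apply (is_RInt_gen_primitive _ _ (fun t => Rpower t (r + 1) / (r + 1))).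
  - apply Filter_prod with (fun a => 0 < a < 1) (fun b => b = 1);
      [apply at_right_0_below; lra | reflexivity | intros a b Ha ->; simpl; lra].
  - intros x Hx. unfold Rpower. auto_derive; [lra |].
    replace ((r + 1) * ln x) with (r * ln x + ln x) by ring.
    rewrite exp_plus, exp_ln by lra. field. split; lra.
  - intros x Hx. apply continuous_Rpower, Hx.
  - apply (filterlim_comp _ _ _ (fun t => Rpower t (r + 1)) (fun u => u / (r + 1)) _ (locally 0));
      [apply filterlim_Rpower_0; lra |].
    apply (continuous_of_ex_derive (fun u => u / (r + 1)) 0). auto_derive. lra.
  - apply (filterlim_at_point (fun t => Rpower t (r + 1) / (r + 1))).
Qed.

Lemma is_RInt_gen_inv_sq_1_infty :
  is_RInt_gen (fun t => / t ^ 2) (at_point 1) (Rbar_locally p_infty) 1.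
Proof.
  replace 1 with (- 0 - - / 1) at 2 by (field_simplify; lra).
  apply (is_RInt_gen_primitive _ _ (fun t => - / t)).
  - apply Filter_prod with (fun a => a = 1) (fun b => 0 < b);
      [reflexivity | exists 0; tauto | intros a b -> Hb; simpl; lra].
  - intros x Hx. auto_derive; [lra | field; lra].
  - intros x Hx. apply continuous_of_ex_derive. auto_derive. nra.
  - apply (filterlim_at_point (fun t => - / t)).
  - apply (filterlim_comp _ _ _ (fun t => / t) Ropp _ (locally 0)).
    + change (is_lim (fun t => / t) p_infty (Rbar_inv p_infty)).
      apply (is_lim_inv (fun t => t)); [apply is_lim_id | discriminate].
    + apply continuous_of_ex_derive. auto_derive. exact I.
Qed.

Lemma filterlim_RInt_of_is_RInt_gen (f : R -> R) {Fa Fb : (R -> Prop) -> Prop}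
  {FFa : Filter Fa} {FFb : Filter Fb} (l : R) :
  filter_prod Fa Fb (fun ab => ex_RInt f (fst ab) (snd ab)) ->
  is_RInt_gen f Fa Fb l ->
  filterlim (fun ab => RInt f (fst ab) (snd ab)) (filter_prod Fa Fb) (locally l).
Proof.
  intros Hex Hf P HP. unfold filtermap. generalize (filter_and _ _ Hex (Hf P HP)). apply filter_imp.
  intros ab [Hab [y [Hy HPy]]]. rewrite (is_RInt_unique _ _ _ _ Hy). exact HPy.
Qed.

Lemma filter_prod_0_infty_outside (a b : R) : 0 < a ->
  filter_prod (at_right 0) (Rbar_locally p_infty) (fun ab => 0 < fst ab < a /\ b < snd ab).
Proof.
  intros Ha. apply Filter_prod with (fun u => 0 < u < a) (fun v => b < v);
    [apply at_right_0_below, Ha | exists b; tauto | tauto].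
Qed.

Local Notation is_RInt_0_infty f l := (@is_RInt_gen R_NormedModule f (at_right 0) (Rbar_locally p_infty) l).

Lemma RInt_le_is_RInt_0_infty (f : R -> R) (l a b : R) :
  (forall t, 0 < t -> continuous f t /\ 0 <= f t) -> 0 < a <= b ->
  is_RInt_0_infty f l -> RInt f a b <= l.
Proof.
  intros Hf Hab Hl.
  assert (ex : forall u v, 0 < u -> 0 < v -> ex_RInt f u v).
  { intros u v Hu Hv. apply (@ex_RInt_continuous R_CompleteNormedModule). intros t Ht.
    apply Hf, (pos_of_Rmin_le u v); [assumption | assumption | apply Ht]. }
  apply (filterlim_le (F := filter_prod (at_right 0) (Rbar_locally p_infty))
           (fun _ => RInt f a b) (fun ab => RInt f (fst ab) (snd ab)) (RInt f a b) l).
  - generalize (filter_prod_0_infty_outside a b (proj1 Hab)). apply filter_imp.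
    intros [u v] [Hu Hv]. simpl in *.
    rewrite <- (RInt_Chasles f u a v), <- (RInt_Chasles f a b v) by (apply ex; lra).
    assert (0 <= RInt f u a) by (apply RInt_ge_0; [lra | apply ex; lra | intros; apply Hf; lra]).
    assert (0 <= RInt f b v) by (apply RInt_ge_0; [lra | apply ex; lra | intros; apply Hf; lra]).
    change (RInt f a b <= RInt f u a + (RInt f a b + RInt f b v)). lra.
  - apply filterlim_const.
  - refine (filterlim_RInt_of_is_RInt_gen f l _ Hl).
    generalize (filter_prod_0_infty_outside 1 0 Rlt_0_1). apply filter_imp.
    intros [u v] [Hu Hv]. apply ex; simpl in *; lra.
Qed.

Lemma is_RInt_0_infty_plus (f g : R -> R) (lf lg : R) :
  is_RInt_0_infty f lf -> is_RInt_0_infty g lg -> is_RInt_0_infty (fun t => f t + g t) (lf + lg).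
Proof. intros Hf Hg. exact (is_RInt_gen_plus f g lf lg Hf Hg). Qed.

Lemma is_RInt_0_infty_scal (c : R) (f : R -> R) (l : R) :
  is_RInt_0_infty f l -> is_RInt_0_infty (fun t => c * f t) (c * l).
Proof. intros Hf. exact (is_RInt_gen_scal f c l Hf). Qed.

Lemma is_RInt_0_infty_minus (f g : R -> R) (lf lg : R) :
  is_RInt_0_infty f lf -> is_RInt_0_infty g lg -> is_RInt_0_infty (fun t => f t - g t) (lf - lg).
Proof. intros Hf Hg. exact (is_RInt_gen_minus f g lf lg Hf Hg). Qed.

Lemma is_RInt_0_infty_ext (f g : R -> R) (l : R) :
  (forall t, 0 < t -> f t = g t) -> is_RInt_0_infty f l -> is_RInt_0_infty g l.
Proof.
  intros H. apply is_RInt_gen_ext.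
  generalize (filter_prod_0_infty_outside 1 1 Rlt_0_1). apply filter_imp.
  intros [a b] Hab t Ht. simpl in *. rewrite Rmin_left in Ht by lra. apply H. lra.
Qed.

Lemma is_RInt_0_infty_unique (f : R -> R) (l l' : R) :
  is_RInt_0_infty f l -> is_RInt_0_infty f l' -> l = l'.
Proof.
  intros H H'. apply (is_RInt_gen_unique (V := R_CompleteNormedModule)) in H, H'. congruence.
Qed.

Lemma is_RInt_0_infty_nonneg (f : R -> R) (l : R) :
  (forall t, 0 < t -> continuous f t /\ 0 <= f t) -> is_RInt_0_infty f l -> 0 <= l.
Proof.
  intros Hf Hl. apply Rle_trans with (RInt f 1 2); [| apply RInt_le_is_RInt_0_infty; [exact Hf | lra | exact Hl]].
  apply RInt_ge_0; [lra | | intros t Ht; apply Hf; lra].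
  apply (@ex_RInt_continuous R_CompleteNormedModule). intros t Ht.
  apply Hf. rewrite Rmin_left in Ht; lra.
Qed.

Lemma Rabs_le_is_RInt_0_infty (f g : R -> R) (lf lg : R) :
  (forall t, 0 < t -> Rabs (f t) <= g t) ->
  is_RInt_0_infty f lf -> is_RInt_0_infty g lg -> Rabs lf <= lg.
Proof.
  intros H.
  apply (RInt_gen_norm (V := R_CompleteNormedModule) (Fa := at_right 0) (Fb := Rbar_locally p_infty));
    generalize (filter_prod_0_infty_outside 1 1 Rlt_0_1); apply filter_imp; intros [a b] Hab; simpl in *.
  - lra.
  - intros t Ht. apply H. lra.
Qed.

(** * The Gamma function and its derivatives *)

Definition gamma_integrand (n : nat) (x t : R) : R :=
  ln t ^ n * Rpower t (x - 1) * exp (- t).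

Definition Gamma_deriv (n : nat) (x : R) : R :=
  RInt_gen (gamma_integrand n x) (at_right 0) (Rbar_locally p_infty).

Lemma Rabs_gamma_integrand (n : nat) (x t : R) :
  Rabs (gamma_integrand n x t) = Rabs (ln t) ^ n * Rpower t (x - 1) * exp (- t).
Proof.
  unfold gamma_integrand. rewrite !Rabs_mult, RPow_abs.
  rewrite (Rabs_pos_eq (Rpower _ _)), (Rabs_pos_eq (exp _)) by (left; apply exp_pos). reflexivity.
Qed.

Lemma continuous_gamma_integrand (n : nat) (x t : R) : 0 < t -> continuous (gamma_integrand n x) t.
Proof. intros Ht. apply continuous_of_ex_derive. unfold gamma_integrand, Rpower. auto_derive. tauto. Qed.

Lemma gamma_integrand_bound_near_0 (n : nat) (x : R) : 0 < x ->
  exists C r, -1 < r /\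
    forall t, 0 < t <= 1 -> Rabs (gamma_integrand n x t) <= C * Rpower t r.
Proof.
  intros Hx.
  (* |ln t| <= t^(-d) / d, with d small enough that the exponent x - 1 - n d stays above -1 *)
  set (d := x / (2 * (INR n + 1))).
  assert (Hn := pos_INR n).
  assert (Hd : 0 < d) by (apply Rdiv_lt_0_compat; lra).
  assert (Hnd : INR n * d <= x / 2).
  { unfold d. apply (Rmult_le_reg_r (2 * (INR n + 1))); [lra |].
    field_simplify; [nra | lra]. }
  exists ((/ d) ^ n), (x - 1 - INR n * d). split; [lra |].
  intros t Ht. rewrite Rabs_gamma_integrand.
  assert (exp (- t) <= 1) by (rewrite <- exp_0; apply exp_le_of_le; lra).
  apply Rle_trans with ((Rpower t (- d) / d) ^ n * Rpower t (x - 1)).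
  - rewrite <- (Rmult_1_r ((Rpower t (- d) / d) ^ n * Rpower t (x - 1))).
    apply Rmult_le_compat; [| left; apply exp_pos | | exact H].
    + apply Rmult_le_pos; [apply pow_le, Rabs_pos | left; apply Rpower_pos].
    + apply Rmult_le_compat_r; [left; apply Rpower_pos |].
      apply pow_incr. split; [apply Rabs_pos | apply Rabs_ln_le_Rpower; assumption].
  - unfold Rdiv. rewrite Rpow_mult_distr, <- Rpower_pow, Rpower_mult by apply Rpower_pos.
    rewrite (Rmult_comm (Rpower t _)), Rmult_assoc, <- Rpower_plus.
    right. f_equal. f_equal. ring.
Qed.

Lemma gamma_integrand_bound_near_infty (n : nat) (x : R) :
  exists C, forall t, 1 <= t -> Rabs (gamma_integrand n x t) <= C / t ^ 2.
Proof.
  set (q := INR n + Rabs (x - 1) + 2).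
  assert (Hq : 2 <= q) by (generalize (pos_INR n) (Rabs_pos (x - 1)); unfold q; lra).
  exists (Rpower q q). intros t Ht. rewrite Rabs_gamma_integrand.
  assert (Hln : 0 <= ln t <= t).
  { split; [rewrite <- ln_1; apply ln_le_of_le; lra |].
    generalize (exp_ineq1_le (ln t)). rewrite exp_ln by lra. lra. }
  apply Rle_trans with (Rpower t (q - 2) * exp (- t)).
  - apply Rmult_le_compat_r; [left; apply exp_pos |].
    rewrite Rabs_pos_eq by lra.
    replace (q - 2) with (INR n + Rabs (x - 1)) by (unfold q; ring).
    rewrite Rpower_plus, Rpower_pow by lra.
    apply Rmult_le_compat; [apply pow_le; lra | left; apply Rpower_pos | apply pow_incr; lra |].
    apply Rle_Rpower; [lra | apply Rle_abs].
  - replace (q - 2) with (q + - INR 2) by (simpl; ring).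
    rewrite Rpower_plus, Rpower_Ropp, Rpower_pow by lra.
    assert (0 < t ^ 2) by (apply pow_lt; lra).
    assert (E : exp t * exp (- t) = 1) by (rewrite <- exp_plus, Rplus_opp_r; apply exp_0).
    assert (B := Rpower_le_exp t q ltac:(lra) ltac:(lra)).
    apply (Rmult_le_reg_r (t ^ 2)); [assumption |].
    replace (Rpower t q * / t ^ 2 * exp (- t) * t ^ 2) with (Rpower t q * exp (- t)) by (field; lra).
    replace (Rpower q q / t ^ 2 * t ^ 2) with (Rpower q q * (exp t * exp (- t))) by (rewrite E; field; lra).
    rewrite <- Rmult_assoc. apply Rmult_le_compat_r; [left; apply exp_pos | exact B].
Qed.

Lemma ex_RInt_gen_gamma_dominated (n : nat) (x : R) (f : R -> R) : 0 < x ->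
  (forall t, 0 < t -> continuous f t /\ Rabs (f t) <= Rabs (gamma_integrand n x t)) ->
  ex_RInt_gen f (at_right 0) (Rbar_locally p_infty).
Proof.
  intros Hx Hf. apply (ex_RInt_gen_Chasles f 1).
  - destruct (gamma_integrand_bound_near_0 n x Hx) as (C & r & Hr & HC).
    refine (ex_RInt_gen_dominated (fun t => 0 < t <= 1) _ f (fun t => C * Rpower t r) _
              (C * / (r + 1)) _ _).
    + intros a b t Ha Hb Ht. unfold Rmin, Rmax in Ht. destruct Rle_dec; lra.
    + intros t Ht. split; [apply Hf; lra | split].
      * apply continuous_of_ex_derive. unfold Rpower. auto_derive. lra.
      * eapply Rle_trans; [apply Hf; lra | apply HC, Ht].
    + apply Filter_prod with (fun a => 0 < a < 1) (fun b => b = 1);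
        [apply at_right_0_below; lra | reflexivity | intros a b Ha ->; simpl; lra].
    + apply (is_RInt_gen_scal _ C _ (is_RInt_gen_Rpower_0_1 r Hr)).
  - destruct (gamma_integrand_bound_near_infty n x) as (C & HC).
    refine (ex_RInt_gen_dominated (fun t => 1 <= t) _ f (fun t => C * / t ^ 2) _ (C * 1) _ _).
    + intros a b t Ha Hb Ht. unfold Rmin, Rmax in Ht. destruct Rle_dec; lra.
    + intros t Ht. split; [apply Hf; lra | split].
      * apply continuous_of_ex_derive. auto_derive. nra.
      * eapply Rle_trans; [apply Hf; lra | apply HC, Ht].
    + apply Filter_prod with (fun a => a = 1) (fun b => 1 < b);
        [reflexivity | exists 1; tauto | intros a b -> Hb; simpl; lra].
    + apply (is_RInt_gen_scal _ C _ is_RInt_gen_inv_sq_1_infty).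
Qed.

Lemma is_RInt_gen_gamma_integrand (n : nat) (x : R) : 0 < x ->
  is_RInt_0_infty (gamma_integrand n x) (Gamma_deriv n x).
Proof.
  intros Hx. apply (RInt_gen_correct (V := R_CompleteNormedModule)).
  apply (ex_RInt_gen_gamma_dominated n x); [exact Hx |].
  intros t Ht. split; [apply continuous_gamma_integrand, Ht | lra].
Qed.

Lemma ex_RInt_gen_Rabs_gamma_integrand (n : nat) (x : R) : 0 < x ->
  exists l, is_RInt_0_infty (fun t => Rabs (gamma_integrand n x t)) l.
Proof.
  intros Hx. eexists. apply (RInt_gen_correct (V := R_CompleteNormedModule)).
  apply (ex_RInt_gen_gamma_dominated n x); [exact Hx |].
  intros t Ht. rewrite Rabs_Rabsolu. split; [| lra].
  apply (continuous_comp (gamma_integrand n x) Rabs); [apply continuous_gamma_integrand, Ht | apply continuous_Rabs].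
Qed.

Lemma gamma_integrand_taylor (n : nat) (x h d t : R) : 0 < t -> Rabs h <= d ->
  Rabs (gamma_integrand n (x + h) t - gamma_integrand n x t - h * gamma_integrand (S n) x t)
  <= h ^ 2 * (Rabs (gamma_integrand (n + 2) (x + d) t) + Rabs (gamma_integrand (n + 2) (x - d) t)).
Proof.
  intros Ht Hh. set (L := ln t).
  assert (E : gamma_integrand n (x + h) t - gamma_integrand n x t - h * gamma_integrand (S n) x t
            = gamma_integrand n x t * (exp (h * L) - 1 - h * L)).
  { unfold gamma_integrand, Rpower. fold L.
    replace ((x + h - 1) * L) with ((x - 1) * L + h * L) by ring. rewrite exp_plus. simpl. ring. }
  assert (shift : forall s, Rabs (gamma_integrand (n + 2) (x + s) t)
                            = Rabs (gamma_integrand n x t) * L ^ 2 * exp (s * L)).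
  { intros s. rewrite !Rabs_gamma_integrand, pow_add, pow2_abs. unfold Rpower. fold L.
    replace ((x + s - 1) * L) with ((x - 1) * L + s * L) by ring. rewrite exp_plus. ring. }
  rewrite E, Rabs_mult, shift. replace (x - d) with (x + - d) by ring. rewrite shift.
  apply Rle_trans with (Rabs (gamma_integrand n x t) * ((h * L) ^ 2 * exp (Rabs (h * L)))).
  - apply Rmult_le_compat_l; [apply Rabs_pos | apply Rabs_exp_sub_1_sub_le].
  - assert (B := exp_Rabs_mul_le h d L Hh).
    assert (0 <= Rabs (gamma_integrand n x t) * (h * L) ^ 2)
      by (apply Rmult_le_pos; [apply Rabs_pos | apply pow2_ge_0]).
    replace (Rabs (gamma_integrand n x t) * ((h * L) ^ 2 * exp (Rabs (h * L))))
      with (Rabs (gamma_integrand n x t) * (h * L) ^ 2 * exp (Rabs (h * L))) by ring.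
    apply Rle_trans with (Rabs (gamma_integrand n x t) * (h * L) ^ 2 * (exp (d * L) + exp (- d * L)));
      [apply Rmult_le_compat_l; assumption | right; ring].
Qed.

Lemma is_derive_Gamma_deriv (n : nat) (x : R) : 0 < x ->
  is_derive (Gamma_deriv n) x (Gamma_deriv (S n) x).
Proof.
  intros Hx. set (d := x / 2).
  destruct (ex_RInt_gen_Rabs_gamma_integrand (n + 2) (x + d)) as [l1 H1]; [unfold d; lra |].
  destruct (ex_RInt_gen_Rabs_gamma_integrand (n + 2) (x - d)) as [l2 H2]; [unfold d; lra |].
  apply (is_derive_of_quadratic_remainder _ x _ (l1 + l2) d); [unfold d; lra |].
  intros h Hh. rewrite (Rmult_comm (l1 + l2)).
  assert (Hxh : 0 < x + h) by (apply Rabs_le_between in Hh; unfold d in Hh; lra).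
  apply (Rabs_le_is_RInt_0_infty
           (fun t => gamma_integrand n (x + h) t - gamma_integrand n x t - h * gamma_integrand (S n) x t)
           (fun t => h ^ 2 * (Rabs (gamma_integrand (n + 2) (x + d) t)
                              + Rabs (gamma_integrand (n + 2) (x - d) t)))).
  - intros t Ht. apply gamma_integrand_taylor; assumption.
  - apply is_RInt_0_infty_minus; [apply is_RInt_0_infty_minus | apply is_RInt_0_infty_scal];
      apply is_RInt_gen_gamma_integrand; assumption.
  - apply is_RInt_0_infty_scal, is_RInt_0_infty_plus; assumption.
Qed.

Lemma Gamma_eq (x : R) : Gamma x = Gamma_deriv 0 x.
Proof.
  unfold Gamma, Gamma_deriv. f_equal. apply functional_extensionality. intros t.
  unfold gamma_integrand. simpl. ring.
Qed.

Lemma Gamma_deriv_0_pos (x : R) : 0 < x -> 0 < Gamma_deriv 0 x.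
Proof.
  intros Hx.
  assert (Hpos : forall t, 0 < t -> 0 < gamma_integrand 0 x t).
  { intros t Ht. unfold gamma_integrand. simpl. rewrite Rmult_1_l.
    apply Rmult_lt_0_compat; [apply Rpower_pos | apply exp_pos]. }
  apply Rlt_le_trans with (RInt (gamma_integrand 0 x) 1 2).
  - apply RInt_gt_0; [lra | intros t Ht; apply Hpos; lra | intros t Ht; apply continuous_gamma_integrand; lra].
  - apply RInt_le_is_RInt_0_infty; [| lra | apply is_RInt_gen_gamma_integrand, Hx].
    intros t Ht. split; [apply continuous_gamma_integrand, Ht | left; apply Hpos, Ht].
Qed.

Lemma Gamma_deriv_0_succ (x : R) : 0 < x -> Gamma_deriv 0 (x + 1) = x * Gamma_deriv 0 x.
Proof.
  intros Hx.
  assert (By_parts : is_RInt_0_infty (fun t => gamma_integrand 0 (x + 1) t - x * gamma_integrand 0 x t) (0 - 0)).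
  { apply (is_RInt_gen_primitive _ _ (fun t => - Rpower t x * exp (- t))).
    - generalize (filter_prod_0_infty_outside 1 1 Rlt_0_1). apply filter_imp. intros ab. lra.
    - intros t Ht. unfold gamma_integrand, Rpower. auto_derive; [exact Ht |].
      replace ((x - 1) * ln t) with (x * ln t + - ln t) by ring. replace (x + 1 - 1) with x by ring.
      rewrite exp_plus, (exp_Ropp (ln t)), exp_ln by exact Ht. simpl. field. lra.
    - intros t Ht. apply continuous_of_ex_derive. unfold gamma_integrand, Rpower. auto_derive. tauto.
    - apply (filterlim_0_of_Rabs_le (fun t => Rpower t x)); [| apply filterlim_Rpower_0, Hx].
      exists (mkposreal 1 Rlt_0_1). intros t _ Ht.
      rewrite Rabs_mult, Rabs_Ropp, !Rabs_pos_eq by (left; apply exp_pos).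
      generalize (Rpower_pos t x) (exp_pos (- t)) (exp_le_of_le (- t) 0 ltac:(lra)).
      rewrite exp_0. nra.
    - destruct (gamma_integrand_bound_near_infty 0 x) as [C HC].
      apply (filterlim_0_of_Rabs_le (fun t => C * / t)).
      + exists 1. intros t Ht. assert (Bt := HC t ltac:(lra)).
        rewrite Rabs_gamma_integrand in Bt. rewrite pow_O in Bt.
        replace (- Rpower t x * exp (- t)) with (- (t * (1 * Rpower t (x - 1) * exp (- t))))
          by (unfold Rpower; replace (x * ln t) with (ln t + (x - 1) * ln t) by ring;
              rewrite exp_plus, exp_ln by lra; ring).
        assert (0 <= 1 * Rpower t (x - 1) * exp (- t))
          by (generalize (Rpower_pos t (x - 1)) (exp_pos (- t)); nra).
        rewrite Rabs_Ropp, Rabs_mult, !Rabs_pos_eq by lra.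
        apply (Rmult_le_compat_l t) in Bt; [| lra].
        replace (C * / t) with (t * (C / t ^ 2)) by (field; lra). exact Bt.
      + assert (L : is_lim (fun t => C * / t) p_infty (Rbar_mult C (Rbar_inv p_infty)))
          by (apply is_lim_scal_l, (is_lim_inv (fun t => t)); [apply is_lim_id | discriminate]).
        simpl in L. rewrite Rmult_0_r in L. exact L. }
  assert (By_linearity : is_RInt_0_infty (fun t => gamma_integrand 0 (x + 1) t - x * gamma_integrand 0 x t)
                           (Gamma_deriv 0 (x + 1) - x * Gamma_deriv 0 x)).
  { apply is_RInt_0_infty_minus; [| apply is_RInt_0_infty_scal]; apply is_RInt_gen_gamma_integrand; lra. }
  generalize (is_RInt_0_infty_unique _ _ _ By_parts By_linearity). lra.
Qed.

(** * Digamma and trigamma *)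

Definition trigamma (x : R) : R :=
  (Gamma_deriv 2 x * Gamma_deriv 0 x - Gamma_deriv 1 x ^ 2) / Gamma_deriv 0 x ^ 2.

Lemma is_derive_lnGamma (x : R) : 0 < x -> is_derive lnGamma x (Gamma_deriv 1 x / Gamma_deriv 0 x).
Proof.
  intros Hx. apply (is_derive_ext (fun y => ln (Gamma_deriv 0 y)));
    [intros y; unfold lnGamma; rewrite Gamma_eq; reflexivity |].
  unfold Rdiv.
  apply (is_derive_comp ln (Gamma_deriv 0)); [| apply is_derive_Gamma_deriv, Hx].
  apply is_derive_Reals, derivable_pt_lim_ln, Gamma_deriv_0_pos, Hx.
Qed.

Lemma digamma_eq (x : R) : 0 < x -> digamma x = Gamma_deriv 1 x / Gamma_deriv 0 x.
Proof. intros Hx. apply is_derive_unique, is_derive_lnGamma, Hx. Qed.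

Lemma is_derive_digamma (x : R) : 0 < x -> is_derive digamma x (trigamma x).
Proof.
  intros Hx. apply (is_derive_ext_loc (fun y => Gamma_deriv 1 y / Gamma_deriv 0 y)).
  { apply (locally_interval _ x 0 p_infty); [exact Hx | exact I |].
    intros y Hy _. symmetry. apply digamma_eq, Hy. }
  assert (H0 := Gamma_deriv_0_pos x Hx).
  unfold trigamma.
  replace ((Gamma_deriv 2 x * Gamma_deriv 0 x - Gamma_deriv 1 x ^ 2) / Gamma_deriv 0 x ^ 2)
    with ((Gamma_deriv 2 x * Gamma_deriv 0 x - Gamma_deriv 1 x * Gamma_deriv 1 x) / Gamma_deriv 0 x ^ 2)
    by (f_equal; ring).
  apply (is_derive_div (Gamma_deriv 1) (Gamma_deriv 0)); [| | lra]; apply is_derive_Gamma_deriv, Hx.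
Qed.

Lemma is_RInt_gen_log_dev_sq (x c : R) : 0 < x ->
  is_RInt_0_infty (fun t => (ln t - c) ^ 2 * gamma_integrand 0 x t)
    (Gamma_deriv 0 x * (trigamma x + (c - Gamma_deriv 1 x / Gamma_deriv 0 x) ^ 2)).
Proof.
  intros Hx. assert (H0 := Gamma_deriv_0_pos x Hx).
  replace (Gamma_deriv 0 x * (trigamma x + (c - Gamma_deriv 1 x / Gamma_deriv 0 x) ^ 2))
    with (Gamma_deriv 2 x - 2 * c * Gamma_deriv 1 x + c ^ 2 * Gamma_deriv 0 x)
    by (unfold trigamma; field; lra).
  apply (is_RInt_0_infty_ext (fun t => gamma_integrand 2 x t - 2 * c * gamma_integrand 1 x t
                                        + c ^ 2 * gamma_integrand 0 x t));
    [intros t _; unfold gamma_integrand; ring |].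
  apply is_RInt_0_infty_plus;
    [apply is_RInt_0_infty_minus; [| apply is_RInt_0_infty_scal] | apply is_RInt_0_infty_scal];
    apply is_RInt_gen_gamma_integrand, Hx.
Qed.

Lemma continuous_log_dev_sq (x c t : R) : 0 < t ->
  continuous (fun t => (ln t - c) ^ 2 * gamma_integrand 0 x t) t.
Proof. intros Ht. apply continuous_of_ex_derive. unfold gamma_integrand, Rpower. auto_derive. tauto. Qed.

Lemma trigamma_nonneg (x : R) : 0 < x -> 0 <= trigamma x.
Proof.
  intros Hx. assert (H0 := Gamma_deriv_0_pos x Hx).
  assert (I := is_RInt_gen_log_dev_sq x (Gamma_deriv 1 x / Gamma_deriv 0 x) Hx).
  rewrite Rminus_diag, pow_i, Rplus_0_r in I by lia.
  apply is_RInt_0_infty_nonneg in I; [nra |].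
  intros t Ht. split; [apply continuous_log_dev_sq, Ht |].
  apply Rmult_le_pos; [apply pow2_ge_0 |]. unfold gamma_integrand. simpl.
  generalize (Rpower_pos t (x - 1)) (exp_pos (- t)). nra.
Qed.

Lemma trigamma_le_inv (x : R) : 1 < x -> trigamma x <= / (x - 1).
Proof.
  intros Hx. assert (H0 := Gamma_deriv_0_pos x ltac:(lra)).
  assert (Rec1 := Gamma_deriv_0_succ x ltac:(lra)).
  assert (Rec0 := Gamma_deriv_0_succ (x - 1) ltac:(lra)). replace (x - 1 + 1) with x in Rec0 by ring.
  assert (Hdom : is_RInt_0_infty
                   (fun t => / x * (gamma_integrand 0 (x + 1) t - 2 * x * gamma_integrand 0 x t
                                    + x ^ 2 * gamma_integrand 0 (x - 1) t))
                   (Gamma_deriv 0 x / (x - 1))).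
  { replace (Gamma_deriv 0 x / (x - 1))
      with (/ x * (Gamma_deriv 0 (x + 1) - 2 * x * Gamma_deriv 0 x + x ^ 2 * Gamma_deriv 0 (x - 1)))
      by (rewrite Rec1, Rec0; field; lra).
    apply is_RInt_0_infty_scal, is_RInt_0_infty_plus;
      [apply is_RInt_0_infty_minus; [| apply is_RInt_0_infty_scal] | apply is_RInt_0_infty_scal];
      apply is_RInt_gen_gamma_integrand; lra. }
  assert (Hpointwise : forall t, 0 < t ->
            Rabs ((ln t - ln x) ^ 2 * gamma_integrand 0 x t)
            <= / x * (gamma_integrand 0 (x + 1) t - 2 * x * gamma_integrand 0 x t
                      + x ^ 2 * gamma_integrand 0 (x - 1) t)).
  { intros t Ht.
    assert (shift : forall y, gamma_integrand 0 (y + 1) t = t * gamma_integrand 0 y t).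
    { intros y. unfold gamma_integrand, Rpower.
      replace ((y + 1 - 1) * ln t) with (ln t + (y - 1) * ln t) by ring.
      rewrite exp_plus, exp_ln by exact Ht. ring. }
    set (g := gamma_integrand 0 (x - 1) t).
    assert (Ex : gamma_integrand 0 x t = t * g)
      by (unfold g; rewrite <- shift; f_equal; ring).
    rewrite shift, Ex.
    assert (Hg : 0 < g) by (unfold g, gamma_integrand; simpl; rewrite Rmult_1_l;
                            apply Rmult_lt_0_compat; [apply Rpower_pos | apply exp_pos]).
    assert (Hln := ln_sq_le (t / x) ltac:(apply Rdiv_lt_0_compat; lra)).
    rewrite ln_div in Hln by lra.
    rewrite Rabs_pos_eq by (apply Rmult_le_pos; [apply pow2_ge_0 | nra]).
    replace (/ x * (t * (t * g) - 2 * x * (t * g) + x ^ 2 * g)) with ((t / x - 1) ^ 2 / (t / x) * t * g)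
      by (field; lra).
    rewrite <- Rmult_assoc.
    apply Rmult_le_compat_r; [lra |]. apply Rmult_le_compat_r; lra. }
  assert (Hle := Rabs_le_is_RInt_0_infty _ _ _ _ Hpointwise
                   (is_RInt_gen_log_dev_sq x (ln x) ltac:(lra)) Hdom).
  apply Rle_trans with (trigamma x + (ln x - Gamma_deriv 1 x / Gamma_deriv 0 x) ^ 2);
    [generalize (pow2_ge_0 (ln x - Gamma_deriv 1 x / Gamma_deriv 0 x)); lra |].
  apply (Rmult_le_reg_l (Gamma_deriv 0 x)); [exact H0 |].
  eapply Rle_trans; [apply Rle_abs | eapply Rle_trans; [exact Hle | right; field; lra]].
Qed.

Lemma mul_trigamma_bound (e l : R) : 0 <= e -> 1 <= l -> 0 <= e * trigamma (e + l) <= 1.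
Proof.
  intros He Hl. assert (T0 := trigamma_nonneg (e + l) ltac:(lra)).
  split; [apply Rmult_le_pos; assumption |].
  destruct (Req_dec e 0) as [->|He0]; [rewrite Rmult_0_l; lra |].
  assert (T1 := trigamma_le_inv (e + l) ltac:(lra)).
  apply Rle_trans with (e * / (e + l - 1)); [apply Rmult_le_compat_l; assumption |].
  apply (Rmult_le_reg_r (e + l - 1)); [lra |]. rewrite Rmult_assoc, Rinv_l by lra. lra.
Qed.

(** * Partial derivatives of the loss *)

Definition brier_score (K : nat) (y a : nat -> R) : R :=
  sumR K (fun k => (y k - a k / sumR K a) ^ 2).

Definition dirichlet_variance (K : nat) (a : nat -> R) : R :=
  sumR K (fun k => a k / sumR K a * (1 - a k / sumR K a) / (sumR K a + 1)).

(* KL(Dir(a) || Dir(lam)) up to the additive constant ln Gamma(sum lam) - sum ln Gamma(lam_k). *)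
Definition dirichlet_kl (K : nat) (lam a : nat -> R) : R :=
  lnGamma (sumR K a) - sumR K (fun k => lnGamma (a k))
  + sumR K (fun k => (a k - lam k) * (digamma (a k) - digamma (sumR K a))).

Lemma loss_VIEDL_split (K : nat) (lam : nat -> R) (beta : R) (a y : nat -> R) :
  loss_VIEDL K lam beta a y = brier_score K y a + dirichlet_variance K a + beta * dirichlet_kl K lam a.
Proof. reflexivity. Qed.

Lemma brier_score_moments (K : nat) (y a : nat -> R) : 0 < sumR K a ->
  brier_score K y a = sumR K (fun k => y k ^ 2) - 2 * sumR K (fun k => y k * a k) / sumR K a
                      + sumR K (fun k => a k ^ 2) / sumR K a ^ 2.
Proof.
  intros HS. unfold brier_score. set (S := sumR K a) in *.
  rewrite (sumR_ext K _ (fun k => y k ^ 2 + (- 2 / S) * (y k * a k) + / S ^ 2 * a k ^ 2))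
    by (intros k _; field; lra).
  rewrite !sumR_plus, !sumR_scal. field. lra.
Qed.

Lemma dirichlet_variance_moments (K : nat) (a : nat -> R) : 0 < sumR K a ->
  dirichlet_variance K a = (1 - sumR K (fun k => a k ^ 2) / sumR K a ^ 2) / (sumR K a + 1).
Proof.
  intros HS. unfold dirichlet_variance. set (S := sumR K a) in *.
  rewrite (sumR_ext K _ (fun k => / (S * (S + 1)) * a k + (- / (S ^ 2 * (S + 1))) * a k ^ 2))
    by (intros k _; field; lra).
  rewrite !sumR_plus, !sumR_scal. fold S. field. lra.
Qed.

Lemma dirichlet_kl_moments (K : nat) (lam a : nat -> R) :
  dirichlet_kl K lam a = lnGamma (sumR K a) - sumR K (fun k => lnGamma (a k))
    + sumR K (fun k => (a k - lam k) * digamma (a k)) - (sumR K a - sumR K lam) * digamma (sumR K a).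
Proof.
  unfold dirichlet_kl.
  rewrite (sumR_ext K (fun k => (a k - lam k) * (digamma (a k) - digamma (sumR K a)))
                      (fun k => (a k - lam k) * digamma (a k) - digamma (sumR K a) * (a k - lam k)))
    by (intros k _; ring).
  rewrite sumR_minus, sumR_scal, sumR_minus. ring.
Qed.

Section Coordinate.

Variables (K : nat) (a : nat -> R) (i : nat).
Hypothesis Hi : (i < K)%nat.
Hypothesis Hpos : forall k, (k < K)%nat -> 0 < a k.

Local Notation S := (sumR K a).

Lemma sumR_pos : 0 < S.
Proof.
  apply Rlt_le_trans with (a i); [apply Hpos, Hi |].
  apply sumR_ge_term; [exact Hi | intros k Hk; left; apply Hpos, Hk].
Qed.

Lemma sumR_upd_self (t : R) : sumR K (upd a i t) = S + (t - a i).
Proof. exact (sumR_upd K (fun _ v => v) a i t Hi). Qed.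

Lemma locally_sumR_upd_pos : locally (a i) (fun t => 0 < sumR K (upd a i t)).
Proof.
  assert (HS := sumR_pos).
  apply (locally_interval _ _ (a i - S) p_infty); [simpl; lra | exact I |].
  intros t Ht _. rewrite sumR_upd_self. simpl in Ht. lra.
Qed.

Lemma is_derive_brier_score_upd (y : nat -> R) :
  is_derive (fun t => brier_score K y (upd a i t)) (a i)
    (2 * (sumR K (fun k => y k * a k) + a i) / S ^ 2 - 2 * y i / S
     - 2 * sumR K (fun k => a k ^ 2) / S ^ 3).
Proof.
  assert (HS := sumR_pos).
  apply (is_derive_ext_loc
           (fun t => sumR K (fun k => y k ^ 2)
                     - 2 * (sumR K (fun k => y k * a k) + (y i * t - y i * a i)) / (S + (t - a i))
                     + (sumR K (fun k => a k ^ 2) + (t ^ 2 - a i ^ 2)) / (S + (t - a i)) ^ 2)).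
  - generalize locally_sumR_upd_pos. apply filter_imp. intros t Ht.
    rewrite brier_score_moments by exact Ht.
    rewrite sumR_upd_self, (sumR_upd K (fun k v => y k * v)), (sumR_upd K (fun _ v => v ^ 2)) by exact Hi.
    reflexivity.
  - set (Y := sumR K (fun k => y k * a k)). set (Q := sumR K (fun k => a k ^ 2)).
    auto_derive; replace (a i + - a i) with 0 by ring; rewrite Rplus_0_r;
      [repeat split; nra | field; lra].
Qed.

Lemma is_derive_dirichlet_variance_upd :
  is_derive (fun t => dirichlet_variance K (upd a i t)) (a i)
    (- (2 * a i / S ^ 2 - 2 * sumR K (fun k => a k ^ 2) / S ^ 3) / (S + 1)
     - (1 - sumR K (fun k => a k ^ 2) / S ^ 2) / (S + 1) ^ 2).
Proof.
  assert (HS := sumR_pos).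
  apply (is_derive_ext_loc
           (fun t => (1 - (sumR K (fun k => a k ^ 2) + (t ^ 2 - a i ^ 2)) / (S + (t - a i)) ^ 2)
                     / (S + (t - a i) + 1))).
  - generalize locally_sumR_upd_pos. apply filter_imp. intros t Ht.
    rewrite dirichlet_variance_moments by exact Ht.
    rewrite sumR_upd_self, (sumR_upd K (fun _ v => v ^ 2)) by exact Hi.
    reflexivity.
  - set (Q := sumR K (fun k => a k ^ 2)).
    auto_derive; replace (a i + - a i) with 0 by ring; rewrite Rplus_0_r;
      [repeat split; nra | field; lra].
Qed.

Lemma is_derive_dirichlet_kl_upd (lam : nat -> R) :
  is_derive (fun t => dirichlet_kl K lam (upd a i t)) (a i)
    ((a i - lam i) * trigamma (a i) - (S - sumR K lam) * trigamma S).
Proof.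
  assert (HS := sumR_pos). assert (Hai := Hpos i Hi).
  set (G := sumR K (fun k => lnGamma (a k))).
  set (P := sumR K (fun k => (a k - lam k) * digamma (a k))).
  set (L := sumR K lam).
  apply (is_derive_ext
           (fun t => lnGamma (S + (t - a i)) - (G + (lnGamma t - lnGamma (a i)))
                     + (P + ((t - lam i) * digamma t - (a i - lam i) * digamma (a i)))
                     - (S + (t - a i) - L) * digamma (S + (t - a i)))).
  { intros t. rewrite dirichlet_kl_moments, sumR_upd_self, (sumR_upd K (fun _ v => lnGamma v)),
      (sumR_upd K (fun k v => (v - lam k) * digamma v)) by exact Hi. reflexivity. }
  assert (DlnG : forall x, 0 < x -> ex_derive lnGamma x)
    by (intros x Hx; eexists; apply is_derive_lnGamma, Hx).
  assert (Dpsi : forall x, 0 < x -> Derive digamma x = trigamma x)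
    by (intros x Hx; apply is_derive_unique, is_derive_digamma, Hx).
  auto_derive; change (fun x => lnGamma x) with lnGamma; change (fun x => digamma x) with digamma;
    replace (S + (a i + - a i)) with S by ring.
  - repeat split; try apply DlnG; try (eexists; apply is_derive_digamma); assumption.
  - change (Derive lnGamma S) with (digamma S). change (Derive lnGamma (a i)) with (digamma (a i)).
    rewrite !Dpsi by assumption. ring.
Qed.

End Coordinate.

Definition loss_partial (K : nat) (lam : nat -> R) (beta : R) (y a : nat -> R) (i : nat) : R :=
  let S := sumR K a in
  let Q := sumR K (fun k => a k ^ 2) in
  (2 * (sumR K (fun k => y k * a k) + a i) / S ^ 2 - 2 * y i / S - 2 * Q / S ^ 3)
  + (- (2 * a i / S ^ 2 - 2 * Q / S ^ 3) / (S + 1) - (1 - Q / S ^ 2) / (S + 1) ^ 2)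
  + beta * ((a i - lam i) * trigamma (a i) - (S - sumR K lam) * trigamma S).

Lemma is_derive_loss_upd (K : nat) (lam : nat -> R) (beta : R) (y a : nat -> R) (i : nat) :
  (forall k, (k < K)%nat -> 0 < a k) -> (i < K)%nat ->
  is_derive (fun t => loss_VIEDL K lam beta (upd a i t) y) (a i) (loss_partial K lam beta y a i).
Proof.
  intros Hpos Hi.
  apply (is_derive_ext (fun t => brier_score K y (upd a i t) + dirichlet_variance K (upd a i t)
                                 + beta * dirichlet_kl K lam (upd a i t)));
    [intros t; symmetry; apply loss_VIEDL_split |].
  apply (is_derive_plus (fun t => brier_score K y (upd a i t) + dirichlet_variance K (upd a i t))
                        (fun t => beta * dirichlet_kl K lam (upd a i t))).
  - apply (is_derive_plus (fun t => brier_score K y (upd a i t)) (fun t => dirichlet_variance K (upd a i t))).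
    + apply is_derive_brier_score_upd; assumption.
    + apply is_derive_dirichlet_variance_upd; assumption.
  - apply (is_derive_scal (fun t => dirichlet_kl K lam (upd a i t))).
    apply is_derive_dirichlet_kl_upd; assumption.
Qed.

Lemma brier_partial_le (S yi Y ai Q : R) :
  2 <= S -> 0 <= yi <= 1 -> 0 <= Y <= S -> 0 <= ai <= S -> 0 <= Q <= S ^ 2 ->
  Rabs (2 * (Y + ai) / S ^ 2 - 2 * yi / S - 2 * Q / S ^ 3) <= 2.
Proof.
  intros HS Hyi HY Hai HQ.
  replace (2 * (Y + ai) / S ^ 2 - 2 * yi / S - 2 * Q / S ^ 3)
    with (2 * (S * Y + S * ai - S ^ 2 * yi - Q) / S ^ 3) by (field; lra).
  apply Rabs_div_le; [apply pow_lt; lra |]. apply Rabs_le. simpl in *.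
  assert (S * Y <= S * S) by nra. assert (S * ai <= S * S) by nra.
  assert (S * S * yi <= S * S) by nra. assert (0 <= S * S * (S - 2)) by nra.
  split; nra.
Qed.

Lemma variance_partial_le (S K ai Q : R) :
  1 <= K <= S -> 0 <= ai <= S -> 0 <= Q <= S ^ 2 ->
  Rabs (- (2 * ai / S ^ 2 - 2 * Q / S ^ 3) / (S + 1) - (1 - Q / S ^ 2) / (S + 1) ^ 2)
  <= 1 / (K + 1) ^ 2 + 2 / (K * (K + 1)).
Proof.
  intros HK Hai HQ.
  assert (T1 : Rabs (- (2 * ai / S ^ 2 - 2 * Q / S ^ 3) / (S + 1)) <= 2 / (K * (K + 1))).
  { replace (- (2 * ai / S ^ 2 - 2 * Q / S ^ 3) / (S + 1)) with (2 * (Q - S * ai) / (S ^ 3 * (S + 1)))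
      by (field; lra).
    apply Rabs_div_le; [apply Rmult_lt_0_compat; [apply pow_lt |]; lra |].
    assert (HKS : / (S * (S + 1)) <= / (K * (K + 1))) by (apply Rinv_le_contravar; nra).
    replace (2 / (K * (K + 1)) * (S ^ 3 * (S + 1))) with (2 * S ^ 2 * (S * (S + 1) / (K * (K + 1))))
      by (field; lra).
    assert (1 <= S * (S + 1) / (K * (K + 1))).
    { apply (Rmult_le_reg_r (K * (K + 1))); [nra |].
      unfold Rdiv. rewrite Rmult_assoc, Rinv_l by nra. nra. }
    apply Rabs_le. simpl in *. split; nra. }
  assert (T2 : 0 <= (1 - Q / S ^ 2) / (S + 1) ^ 2 <= 1 / (K + 1) ^ 2).
  { assert (0 <= Q / S ^ 2 <= 1).
    { split; [apply Rdiv_le_0_compat; [lra | apply pow_lt; lra] |].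
      apply (Rmult_le_reg_r (S ^ 2)); [apply pow_lt; lra |].
      unfold Rdiv. rewrite Rmult_assoc, Rinv_l by (apply pow_nonzero; lra). lra. }
    assert (/ (S + 1) ^ 2 <= / (K + 1) ^ 2)
      by (apply Rinv_le_contravar; [apply pow_lt; lra | apply pow_incr; lra]).
    assert (0 < / (S + 1) ^ 2) by (apply Rinv_0_lt_compat, pow_lt; lra).
    unfold Rdiv. split; [apply Rmult_le_pos; lra | nra]. }
  set (A := - (2 * ai / S ^ 2 - 2 * Q / S ^ 3) / (S + 1)) in *.
  set (B := (1 - Q / S ^ 2) / (S + 1) ^ 2) in *.
  unfold Rminus. eapply Rle_trans; [apply Rabs_triang |]. rewrite Rabs_Ropp, (Rabs_pos_eq B) by lra.
  lra.
Qed.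

Lemma brier_partial_bound (K : nat) (y a : nat -> R) (i : nat) :
  in_simplex K y -> (forall k, (k < K)%nat -> 1 <= a k) -> (i < K)%nat ->
  Rabs (2 * (sumR K (fun k => y k * a k) + a i) / sumR K a ^ 2 - 2 * y i / sumR K a
        - 2 * sumR K (fun k => a k ^ 2) / sumR K a ^ 3) <= 2.
Proof.
  intros [Hy Hy1] Ha Hi.
  assert (Hyi := Hy i Hi). assert (Hai := Ha i Hi).
  destruct (Nat.eq_dec K 1) as [->|HK].
  - (* a single class: y 0 = 1 and this part of the derivative vanishes *)
    assert (i = 0%nat) as -> by lia. cbn [sumR] in *. rewrite !Rplus_0_l in *. rewrite Hy1.
    replace (2 * (1 * a 0%nat + a 0%nat) / a 0%nat ^ 2 - 2 * 1 / a 0%nat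
             - 2 * (a 0%nat ^ 2) / a 0%nat ^ 3) with 0 by (field; lra).
    rewrite Rabs_R0. lra.
  - assert (HS : 2 <= sumR K a).
    { apply Rle_trans with (INR K); [| apply sumR_ge_INR, Ha].
      replace 2 with (INR 2) by (simpl; ring). apply le_INR. lia. }
    apply brier_partial_le; [exact HS | exact Hyi | split | split | split].
    + apply sumR_nonneg. intros k Hk. generalize (Hy k Hk) (Ha k Hk). nra.
    + apply sumR_le. intros k Hk. generalize (Hy k Hk) (Ha k Hk). nra.
    + lra.
    + apply sumR_ge_term; [exact Hi | intros k Hk; generalize (Ha k Hk); lra].
    + apply sumR_nonneg. intros k Hk. apply pow2_ge_0.
    + apply sumR_sq_le_sq. intros k Hk. generalize (Ha k Hk). lra.
Qed.

Lemma Rabs_loss_partial_le (K : nat) (lam : nat -> R) (beta : R) (y a : nat -> R) (i : nat) :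
  (1 <= K)%nat -> (forall k, (k < K)%nat -> 1 <= lam k) -> 0 < beta -> in_simplex K y ->
  (forall k, (k < K)%nat -> lam k <= a k) -> (i < K)%nat ->
  Rabs (loss_partial K lam beta y a i) <= Lh_bound K lam beta.
Proof.
  intros HK Hlam Hbeta Hy Ha Hi.
  assert (Ha1 : forall k, (k < K)%nat -> 1 <= a k) by (intros k Hk; generalize (Hlam k Hk) (Ha k Hk); lra).
  assert (HK1 : 1 <= INR K) by (apply (le_INR 1); exact HK).
  assert (HSK : INR K <= sumR K a) by (apply sumR_ge_INR, Ha1).
  assert (HLK : INR K <= sumR K lam) by (apply sumR_ge_INR, Hlam).
  assert (Hm : 1 <= minR K lam) by (apply minR_ge; assumption).
  assert (B1 := brier_partial_bound K y a i Hy Ha1 Hi).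
  assert (B2 : Rabs (- (2 * a i / sumR K a ^ 2 - 2 * sumR K (fun k => a k ^ 2) / sumR K a ^ 3) / (sumR K a + 1)
                     - (1 - sumR K (fun k => a k ^ 2) / sumR K a ^ 2) / (sumR K a + 1) ^ 2)
               <= 1 / (INR K + 1) ^ 2 + 2 / (INR K * (INR K + 1))).
  { apply variance_partial_le; [lra | split | split].
    - generalize (Ha1 i Hi). lra.
    - apply sumR_ge_term; [exact Hi | intros k Hk; generalize (Ha1 k Hk); lra].
    - apply sumR_nonneg. intros k Hk. apply pow2_ge_0.
    - apply sumR_sq_le_sq. intros k Hk. generalize (Ha1 k Hk). lra. }
  assert (B3 : Rabs (beta * ((a i - lam i) * trigamma (a i) - (sumR K a - sumR K lam) * trigamma (sumR K a)))
               <= beta).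
  { assert (Ti := mul_trigamma_bound (a i - lam i) (lam i) ltac:(generalize (Ha i Hi); lra) (Hlam i Hi)).
    assert (TS := mul_trigamma_bound (sumR K a - sumR K lam) (sumR K lam)
                    ltac:(rewrite <- sumR_minus; apply sumR_nonneg; intros k Hk; generalize (Ha k Hk); lra)
                    ltac:(lra)).
    replace (a i - lam i + lam i) with (a i) in Ti by ring.
    replace (sumR K a - sumR K lam + sumR K lam) with (sumR K a) in TS by ring.
    rewrite Rabs_mult, Rabs_pos_eq by lra. rewrite <- (Rmult_1_r beta) at 2.
    apply Rmult_le_compat_l; [lra | apply Rabs_le; lra]. }
  assert (0 < 1 / minR K lam) by (apply Rdiv_lt_0_compat; lra).
  assert (0 < 1 / sumR K lam) by (apply Rdiv_lt_0_compat; lra).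
  unfold loss_partial, Lh_bound.
  eapply Rle_trans; [apply Rabs_triang |]. eapply Rle_trans; [apply Rplus_le_compat_r, Rabs_triang |].
  nra.
Qed.

Lemma loss_partial_bound (K : nat) (lam : nat -> R) (beta : R) (y a : nat -> R) (i : nat) :
  (1 <= K)%nat -> (forall k, (k < K)%nat -> 1 <= lam k) -> 0 < beta -> in_simplex K y ->
  (forall k, (k < K)%nat -> lam k <= a k) -> (i < K)%nat ->
  ex_derive (fun t => loss_VIEDL K lam beta (upd a i t) y) (a i) /\
  Rabs (Derive (fun t => loss_VIEDL K lam beta (upd a i t) y) (a i)) <= Lh_bound K lam beta.
Proof.
  intros HK Hlam Hbeta Hy Ha Hi.
  assert (Hpos : forall k, (k < K)%nat -> 0 < a k)
    by (intros k Hk; generalize (Hlam k Hk) (Ha k Hk); lra).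
  assert (D := is_derive_loss_upd K lam beta y a i Hpos Hi).
  split; [eexists; exact D |].
  replace (Derive (fun t => loss_VIEDL K lam beta (upd a i t) y) (a i)) with (loss_partial K lam beta y a i)
    by (symmetry; apply is_derive_unique, D).
  apply Rabs_loss_partial_le; assumption.
Qed.

(** * Lipschitz continuity *)

Section Lipschitz.

Variables (K : nat) (lo : nat -> R) (F : (nat -> R) -> R) (L : R).

Hypothesis F_ext : forall a b, (forall k, (k < K)%nat -> a k = b k) -> F a = F b.

Hypothesis F_partial : forall a i, (forall k, (k < K)%nat -> lo k <= a k) -> (i < K)%nat ->
  ex_derive (fun t => F (upd a i t)) (a i) /\ Rabs (Derive (fun t => F (upd a i t)) (a i)) <= L.

Lemma Rabs_sub_upd_le (a : nat -> R) (m : nat) (u : R) :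
  (forall k, (k < K)%nat -> lo k <= a k) -> (m < K)%nat -> lo m <= u ->
  Rabs (F a - F (upd a m u)) <= L * Rabs (a m - u).
Proof.
  intros Ha Hm Hu.
  assert (Hg : forall x, Rmin (a m) u <= x <= Rmax (a m) u ->
                 ex_derive (fun t => F (upd a m t)) x /\ Rabs (Derive (fun t => F (upd a m t)) x) <= L).
  { intros x Hx.
    assert (Hbox : forall k, (k < K)%nat -> lo k <= upd a m x k).
    { intros k Hk. unfold upd. destruct (Nat.eqb_spec k m) as [->|]; [| apply Ha, Hk].
      generalize (Ha m Hm) (Rmin_glb (a m) u (lo m) (Ha m Hm) Hu). lra. }
    destruct (F_partial (upd a m x) m Hbox Hm) as [Hex Hle].
    rewrite upd_eq in Hex, Hle.
    assert (E : forall t, F (upd (upd a m x) m t) = F (upd a m t))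
      by (intros t; rewrite upd_upd; reflexivity).
    split; [apply (ex_derive_ext _ _ _ E Hex) | rewrite <- (Derive_ext _ _ _ E); exact Hle]. }
  destruct (MVT_gen (fun t => F (upd a m t)) (a m) u (Derive (fun t => F (upd a m t))))
    as [c [Hc Hmvt]].
  - intros x Hx. apply Derive_correct, Hg. lra.
  - intros x Hx. apply continuity_pt_filterlim, continuous_of_ex_derive, Hg, Hx.
  - rewrite <- Rabs_Ropp, <- (upd_same a m) at 1.
    rewrite Ropp_minus_distr, Hmvt, Rabs_mult, (Rabs_minus_sym u).
    apply Rmult_le_compat_r; [apply Rabs_pos | apply Hg, Hc].
Qed.

Lemma Rabs_sub_le_sumR (a b : nat -> R) :
  (forall k, (k < K)%nat -> lo k <= a k) -> (forall k, (k < K)%nat -> lo k <= b k) ->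
  Rabs (F a - F b) <= L * sumR K (fun k => Rabs (a k - b k)).
Proof.
  intros Ha Hb.
  set (mix := fun m k => if Nat.ltb k m then b k else a k).
  assert (Hmix : forall m k, (k < K)%nat -> lo k <= mix m k)
    by (intros m k Hk; unfold mix; destruct (Nat.ltb k m); [apply Hb | apply Ha]; exact Hk).
  assert (Hstep : forall m, mix (S m) = upd (mix m) m (b m)).
  { intros m. apply functional_extensionality. intros k. unfold mix, upd.
    destruct (Nat.eqb_spec k m), (Nat.ltb_spec k (S m)), (Nat.ltb_spec k m);
      solve [subst; reflexivity | lia]. }
  assert (Hind : forall m, (m <= K)%nat ->
            Rabs (F a - F (mix m)) <= L * sumR m (fun k => Rabs (a k - b k))).
  { induction m as [|m IH]; intros Hm.
    - replace (mix 0%nat) with a by (apply functional_extensionality; reflexivity).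
      rewrite Rminus_diag, Rabs_R0. simpl. lra.
    - assert (Hmm : mix m m = a m) by (unfold mix; rewrite Nat.ltb_irrefl; reflexivity).
      assert (Hst := Rabs_sub_upd_le (mix m) m (b m) (Hmix m) ltac:(lia) (Hb m ltac:(lia))).
      rewrite <- Hstep, Hmm in Hst. cbn [sumR]. rewrite Rmult_plus_distr_l.
      replace (F a - F (mix (S m))) with ((F a - F (mix m)) + (F (mix m) - F (mix (S m)))) by ring.
      eapply Rle_trans; [apply Rabs_triang |]. apply Rplus_le_compat; [apply IH; lia | exact Hst]. }
  replace (F b) with (F (mix K))
    by (apply F_ext; intros k Hk; unfold mix; rewrite (proj2 (Nat.ltb_lt k K) Hk); reflexivity).
  apply Hind. lia.
Qed.

End Lipschitz.

Lemma lam_le_alpha_of (lam e : nat -> R) (k : nat) : 0 <= e k -> lam k <= alpha_of lam e k.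
Proof. unfold alpha_of. lra. Qed.

Lemma loss_VIEDL_ext (K : nat) (lam : nat -> R) (beta : R) (a b y : nat -> R) :
  (forall k, (k < K)%nat -> a k = b k) -> loss_VIEDL K lam beta a y = loss_VIEDL K lam beta b y.
Proof.
  intros H. unfold loss_VIEDL. rewrite (sumR_ext K a b H).
  assert (same : forall g : nat -> R -> R, sumR K (fun k => g k (a k)) = sumR K (fun k => g k (b k)))
    by (intros g; apply sumR_ext; intros k Hk; rewrite H by exact Hk; reflexivity).
  rewrite (same (fun k v => (y k - v / sumR K b) ^ 2)),
    (same (fun _ v => v / sumR K b * (1 - v / sumR K b) / (sumR K b + 1))),
    (same (fun _ v => lnGamma v)),
    (same (fun k v => (v - lam k) * (digamma v - digamma (sumR K b)))).
  reflexivity.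
Qed.

Theorem theoremB1 (K : nat) (lam : nat -> R) (beta : R) :
  (1 <= K)%nat ->
  (forall k, (k < K)%nat -> 1 <= lam k) ->
  0 < beta ->
  (* uniform bound on the partial derivatives w.r.t. the network output *)
  (forall (y e : nat -> R) (i : nat),
      in_simplex K y ->
      (forall k, (k < K)%nat -> 0 <= e k) ->
      (i < K)%nat ->
      ex_derive (fun t => loss_VIEDL K lam beta (upd (alpha_of lam e) i t) y)
                (alpha_of lam e i) /\
      Rabs (Derive (fun t => loss_VIEDL K lam beta (upd (alpha_of lam e) i t) y)
                   (alpha_of lam e i)) <= Lh_bound K lam beta)
  /\
  (* hence global Lipschitz continuity in the network output (l1 norm) *)
  (forall (y e e' : nat -> R),
      in_simplex K y ->
      (forall k, (k < K)%nat -> 0 <= e k) ->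
      (forall k, (k < K)%nat -> 0 <= e' k) ->
      Rabs (loss_VIEDL K lam beta (alpha_of lam e) y
            - loss_VIEDL K lam beta (alpha_of lam e') y)
      <= Lh_bound K lam beta * sumR K (fun k => Rabs (e k - e' k))).
Proof.
  intros HK Hlam Hbeta. split.
  - intros y e i Hy He Hi.
    apply loss_partial_bound; try assumption. intros k Hk. apply lam_le_alpha_of, He, Hk.
  - intros y e e' Hy He He'.
    rewrite (sumR_ext K (fun k => Rabs (e k - e' k)) (fun k => Rabs (alpha_of lam e k - alpha_of lam e' k)))
      by (intros k _; unfold alpha_of; f_equal; ring).
    apply (Rabs_sub_le_sumR K lam (fun a => loss_VIEDL K lam beta a y)).
    + intros a b. apply loss_VIEDL_ext.
    + intros a i Ha Hi. apply loss_partial_bound; assumption.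
    + intros k Hk. apply lam_le_alpha_of, He, Hk.
    + intros k Hk. apply lam_le_alpha_of, He', Hk.
Qed.
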